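(* Let $l:\mathbb{R}^p\to\mathbb{R}$ be convex and differentiable, let $\lambda_1\ge\dots\ge\lambda_p\ge0$ be arbitrary, and let $\hat b$ be a minimizer of $l(b)+\sum_{i=1}^p\lambda_i|b|_{(i)}$. Let $U(b)=-\nabla l(b)$. If $|\hat b_j|>|\hat b_k|$, then $|U_j(\hat b)|\ge|U_k(\hat b)|$.
   Context: $|b|_{(1)}\ge\dots\ge|b|_{(p)}$ denote the ordered absolute values of the entries of $b\in\mathbb{R}^p$. *)

From HB Require Import structures.
From mathcomp Require Import all_boot all_order all_algebra.
From mathcomp Require Import all_classical all_reals all_analysis.
Set Implicit Arguments. Unset Strict Implicit. Unset Printing Implicit Defensive.
Import Order.TTheory GRing.Theory Num.Theory.
Import numFieldNormedType.Exports.
Local Open Scope ring_scope.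

(* Vectors of R^p are row vectors 'rV[R]_p; b 0 i is the i-th coordinate. *)

Definition convex_fun (R : realType) (p : nat) (l : 'rV[R]_p -> R) : Prop :=
  forall (x y : 'rV[R]_p) (t : R), 0 <= t -> t <= 1 ->
    l (t *: x + (1 - t) *: y) <= t * l x + (1 - t) * l y.

Definition grad (R : realType) (p : nat) (l : 'rV[R]_p -> R) (b : 'rV[R]_p)
  : 'rV[R]_p := \row_(j < p) ('D_(delta_mx 0 j) l b).

Definition sorted_abs (R : realType) (p : nat) (b : 'rV[R]_p) : seq R :=
  sort (fun x y : R => y <= x) [seq `|b 0 i| | i <- enum 'I_p].

(* |b|_(i+1) (0-indexed i) *)
Definition ord_abs (R : realType) (p : nat) (b : 'rV[R]_p) (i : 'I_p) : R :=
  nth 0 (sorted_abs b) i.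

Definition slope_obj (R : realType) (p : nat) (l : 'rV[R]_p -> R)
  (lam : 'I_p -> R) (b : 'rV[R]_p) : R :=
  l b + \sum_(i < p) lam i * ord_abs b i.

(* The SLOPE penalty J(b) = sum_i lam_i |b|_(i) is, by the rearrangement
   inequality, the largest of the sums sum_m lam_(q m) |b_m| over permutations q.
   Hence moving an amount t from |b_j| to |b_k| does not increase J as long as
   |b_k| + t <= |b_j|: whichever of j, k the maximizing permutation ranks
   higher, the sum for it or for its composite with the transposition (j k)
   dominates.  With g the gradient of l at bhat, the direction
   v = - sg(bhat_j) e_j - sg(g_k) e_k is of this kind for small t > 0, so
   minimality of bhat gives 0 <= D_v l(bhat) = - sg(bhat_j) g_j - |g_k|,
   whence |g_k| <= |g_j|. *)

From HB Require Import structures.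
From mathcomp Require Import all_boot all_order all_algebra.
From mathcomp Require Import all_classical all_reals all_analysis.
From mathcomp Require Import perm lra.
Import Order.TTheory GRing.Theory Num.Theory.
Import numFieldNormedType.Exports.
Set Implicit Arguments.
Unset Strict Implicit.
Unset Printing Implicit Defensive.
Local Open Scope ring_scope.

Section Rearrangement.
Variable R : realFieldType.
Local Notation geR := (fun x y : R => y <= x).

Definition weighted_sum (w : nat -> R) (s : seq R) : R :=
  \sum_(i < size s) w i * s`_i.

Lemma weighted_sum_cons w x s :
  weighted_sum w (x :: s) = w 0%N * x + weighted_sum (fun n => w n.+1) s.
Proof. by rewrite /weighted_sum /= big_ord_recl. Qed.

Fixpoint insert_ge (x : R) (t : seq R) : seq R :=
  if t is y :: t' then
    if y <= x then x :: t else y :: insert_ge x t'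
  else [:: x].

Lemma perm_insert_ge x t : perm_eq (insert_ge x t) (x :: t).
Proof.
elim: t => //= y t IH; case: ifP => _ //.
by rewrite (perm_trans (y := y :: x :: t)) ?perm_cons // (perm_catCA [:: y] [:: x]).
Qed.

Lemma geR_trans : transitive geR.
Proof. by move=> y x z xy yz; apply: le_trans xy. Qed.

Lemma geR_anti : antisymmetric geR.
Proof. by move=> x y /andP[yx xy]; apply/le_anti; rewrite yx xy. Qed.

Lemma geR_total : total geR.
Proof. by move=> x y; apply: le_total. Qed.

Lemma sorted_insert_ge x t : sorted geR t -> sorted geR (insert_ge x t).
Proof.
elim: t => //= y t IH pt; case: ifP => [yx | /negbT]; first by rewrite /= yx.
rewrite -ltNge => /ltW xy; move: pt; rewrite /= !(path_sortedE geR_trans).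
case/andP=> ty st; rewrite IH // andbT (perm_all _ (perm_insert_ge x t)) /=.
by rewrite xy.
Qed.

Lemma sort_ge_cons x s : sort geR (x :: s) = insert_ge x (sort geR s).
Proof.
apply: (sorted_eq geR_trans geR_anti).
- exact: sort_sorted geR_total _.
- exact/sorted_insert_ge/sort_sorted/geR_total.
by rewrite perm_sort perm_sym (permPl (perm_insert_ge _ _)) perm_cons perm_sort.
Qed.

Lemma weighted_sum_insert_ge w x t : {homo w : m n / (m <= n)%N >-> n <= m} ->
  weighted_sum w (x :: t) <= weighted_sum w (insert_ge x t).
Proof.
elim: t w => [|y t IH] u u_noninc //=.
case: ifP => yx //; rewrite !weighted_sum_cons addrA.
have u_noninc' : {homo (fun n => u n.+1) : m n / (m <= n)%N >-> n <= m}.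
  by move=> m n mn; apply: u_noninc.
have := IH _ u_noninc'; rewrite weighted_sum_cons.
have : 0 <= (u 0%N - u 1%N) * (y - x).
  by apply: mulr_ge0; rewrite subr_ge0 ?u_noninc // ltW // ltNge yx.
lra.
Qed.

Lemma weighted_sum_le_sort w s : {homo w : m n / (m <= n)%N >-> n <= m} ->
  weighted_sum w s <= weighted_sum w (sort geR s).
Proof.
elim: s w => [|x s IH] w w_noninc //.
rewrite sort_ge_cons (le_trans _ (weighted_sum_insert_ge _ _ w_noninc)) //.
by rewrite !weighted_sum_cons lerD2l IH // => m n mn; apply: w_noninc.
Qed.

End Rearrangement.

Lemma perm_map_enum_perm (T : eqType) (p : nat) (f : 'I_p -> T) (q : {perm 'I_p}) :
  perm_eq [seq f (q i) | i <- enum 'I_p] [seq f i | i <- enum 'I_p].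
Proof.
apply/(tuple_permP (t := [tuple f i | i < p])); exists q.
by apply: eq_map => i; rewrite tnth_mktuple.
Qed.

Lemma bigD2 (T : Type) (idx : T) (op : Monoid.com_law idx) (I : finType)
    (F : I -> T) (j k : I) : j != k ->
  \big[op/idx]_i F i =
  op (op (F j) (F k)) (\big[op/idx]_(i | (i != j) && (i != k)) F i).
Proof.
by move=> jk; rewrite (bigD1 j) // (bigD1 k) 1?eq_sym //= Monoid.mulmA.
Qed.

Lemma normr_sg_le1 (R : numDomainType) (x : R) : `|Num.sg x| <= 1.
Proof. by rewrite normr_sg; case: (x != 0). Qed.

Lemma norm_subr_sg (R : realDomainType) (a t : R) : 0 <= t <= `|a| ->
  `|a - t * Num.sg a| = `|a| - t.
Proof.
case/andP=> t_ge0; have [-> | a_neq0] := eqVneq a 0.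
  by rewrite sgr0 mulr0 subr0 normr0; lra.
move=> t_le.
rewrite -{1}(mulr_sg_norm a) (mulrC t) -mulrBr normrM normr_sg a_neq0 mul1r.
by rewrite ger0_norm ?subr_ge0.
Qed.

Section SlopePenalty.
Variables (R : realType) (p : nat) (lam : 'I_p -> R).
Hypothesis lam_noninc : forall i i' : 'I_p, (i <= i')%N -> lam i' <= lam i.
Hypothesis lam_ge0 : forall i, 0 <= lam i.

Definition slope_pen (b : 'rV[R]_p) : R := \sum_(i < p) lam i * ord_abs b i.

Definition perm_pen (q : {perm 'I_p}) (b : 'rV[R]_p) : R :=
  \sum_m lam (q m) * `|b 0 m|.

Lemma slope_objE l b : slope_obj l lam b = l b + slope_pen b.
Proof. by []. Qed.

Definition lam_ext (n : nat) : R := if insub n is Some i then lam i else 0.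

Lemma lam_ext_noninc : {homo lam_ext : m n / (m <= n)%N >-> n <= m}.
Proof.
move=> m n mn; rewrite /lam_ext.
case: insubP => [i _ ni|_]; case: insubP => [i' _ mi'|mp] //.
- by apply: lam_noninc; rewrite ni mi'.
- by rewrite (leq_ltn_trans mn) // -ni ltn_ord in mp.
Qed.

Lemma weighted_sum_lam_ext s : size s = p ->
  weighted_sum lam_ext s = \sum_(i < p) lam i * s`_i.
Proof.
move=> sp; rewrite /weighted_sum sp; apply: eq_bigr => i _.
by rewrite /lam_ext valK.
Qed.

Lemma perm_pen_le_slope_pen q b : perm_pen q b <= slope_pen b.
Proof.
pose x := [seq `|b 0 ((q^-1)%g i)| | i <- enum 'I_p].
have size_x : size x = p by rewrite size_map size_enum_ord.
have -> : perm_pen q b = weighted_sum lam_ext x.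
  rewrite weighted_sum_lam_ext // /perm_pen (reindex_inj (@perm_inj _ (q^-1)%g)).
  by apply: eq_bigr => i _; rewrite permKV (nth_map i) ?size_enum_ord ?nth_ord_enum.
have sortE : sorted_abs b = sort (fun x y : R => y <= x) x.
  apply/perm_sortP; [exact: geR_total | exact: geR_trans | exact: geR_anti |].
  by rewrite perm_sym perm_map_enum_perm.
have -> : slope_pen b = weighted_sum lam_ext (sort (fun x y : R => y <= x) x).
  by rewrite weighted_sum_lam_ext ?size_sort // -sortE.
exact/weighted_sum_le_sort/lam_ext_noninc.
Qed.

Lemma slope_pen_perm_pen b : exists q, slope_pen b = perm_pen q b.
Proof.
have /tuple_permP[s sE] : perm_eq (sorted_abs b) [tuple `|b 0 i| | i < p].
  by rewrite /sorted_abs perm_sort /=.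
exists (s^-1)%g; rewrite /perm_pen (reindex_inj (@perm_inj _ s)).
apply: eq_bigr => i _.
by rewrite permK /ord_abs sE -tnth_nth !tnth_mktuple.
Qed.

Lemma slope_pen_transfer (b b' : 'rV[R]_p) (j k : 'I_p) (t : R) : j != k -> 0 <= t ->
  `|b' 0 j| + t <= `|b 0 j| -> `|b' 0 k| <= `|b 0 k| + t ->
  `|b 0 k| + t <= `|b 0 j| ->
  (forall m, m != j -> m != k -> `|b' 0 m| <= `|b 0 m|) ->
  slope_pen b' <= slope_pen b.
Proof.
move=> jk t_ge0 bj bk bkj bm; have [q ->] := slope_pen_perm_pen b'.
suff [r rq] : exists2 r : {perm 'I_p}, {in [pred m | (m != j) && (m != k)], r =1 q} &
    lam (q j) * `|b' 0 j| + lam (q k) * `|b' 0 k| <=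
    lam (r j) * `|b 0 j| + lam (r k) * `|b 0 k|.
  move=> jk_le; apply: le_trans (perm_pen_le_slope_pen r b).
  rewrite /perm_pen !(bigD2 _ _ jk) lerD // ler_sum // => m /andP[mj mk].
  by rewrite rq ?inE ?mj ?mk // ler_wpM2l ?bm.
have := lam_ge0 (q j); have := lam_ge0 (q k).
have [qjk | qkj] := leqP (q j) (q k).
- exists q => //; have := lam_noninc qjk; nra.
- exists (tperm j k * q)%g.
    by move=> m /andP[mj mk]; rewrite permM tpermD // eq_sym.
  rewrite !permM tpermL tpermR; have := lam_noninc (ltnW qkj); nra.
Qed.

Lemma slope_pen_shift (b : 'rV[R]_p) (j k : 'I_p) (c t : R) :
  `|c| <= 1 -> 0 < t -> `|b 0 k| + t <= `|b 0 j| ->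
  slope_pen (b + t *: (- Num.sg (b 0 j) *: delta_mx 0 j + c *: delta_mx 0 k))
    <= slope_pen b.
Proof.
move=> c_le1 t_gt0 bkj.
have jk : j != k by apply: contraTneq bkj => ->; rewrite -ltNge ltrDl.
set b' := b + _.
have b'E m :
    b' 0 m = b 0 m + t * (- Num.sg (b 0 j) * (m == j)%:R + c * (m == k)%:R).
  by rewrite !mxE.
apply: (slope_pen_transfer jk (ltW t_gt0)) => //.
- rewrite b'E eqxx (negbTE jk) mulr1 mulr0 addr0 mulrN norm_subr_sg ?subrK //.
  by rewrite ltW //=; have := normr_ge0 (b 0 k); lra.
- rewrite b'E eqxx eq_sym (negbTE jk) mulr1 mulr0 add0r.
  rewrite (le_trans (ler_normD _ _)) // lerD2l normrM gtr0_norm //.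
  by rewrite ler_piMr // ltW.
- by move=> m mj mk; rewrite b'E (negbTE mj) (negbTE mk) !mulr0 addr0 mulr0 addr0.
Qed.

End SlopePenalty.

Lemma derive_ge0_at_right_min (R : realType) (V : normedModType R) (f : V -> R)
    (b v : V) (e : R) :
  derivable f b v -> 0 < e ->
  (forall t, 0 < t -> t < e -> f b <= f (b + t *: v)) -> 0 <= 'D_v f b.
Proof.
move=> df e_gt0 fb_min; rewrite /derive cvg_at_rightE; last exact: df.
apply: limr_ge; first by apply/cvg_ex; eexists; apply: cvg_dnbhs_at_right; exact: df.
near=> t.
have t_gt0 : 0 < t by near: t; exact: nbhs_right_gt.
have t_lt_e : t < e by near: t; exact: nbhs_right_lt.
apply: mulr_ge0; first by rewrite invr_ge0 ltW.
by rewrite subr_ge0 /= /shift addrC fb_min.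
Unshelve. all: by end_near.
Qed.

Theorem proposition3 (R : realType) (p : nat) (l : 'rV[R]_p -> R)
  (lam : 'I_p -> R) (bhat : 'rV[R]_p) (j k : 'I_p) :
  convex_fun l ->
  (forall b : 'rV[R]_p, differentiable l b) ->
  (forall i i' : 'I_p, (i <= i')%N -> lam i' <= lam i) ->
  (forall i : 'I_p, 0 <= lam i) ->
  (forall b : 'rV[R]_p, slope_obj l lam bhat <= slope_obj l lam b) ->
  `|bhat 0 j| > `|bhat 0 k| ->
  `|(- grad l bhat) 0 j| >= `|(- grad l bhat) 0 k|.
Proof.
move=> _ l_diff lam_noninc lam_ge0 bhat_min bjk.
pose g m := 'D_(delta_mx 0 m) l bhat.
rewrite !mxE !normrN -/(g j) -/(g k).
pose sj := Num.sg (bhat 0 j); pose sk := Num.sg (g k).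
pose v : 'rV[R]_p := - sj *: delta_mx 0 j + - sk *: delta_mx 0 k.
have Dv : 'D_v l bhat = - sj * g j - sk * g k.
  by rewrite /g !(deriveE _ (l_diff bhat)) linearD !linearZ /= scalerN -scaleNr.
have : 0 <= 'D_v l bhat.
  apply: (derive_ge0_at_right_min (e := `|bhat 0 j| - `|bhat 0 k|)).
  - exact: diff_derivable.
  - by rewrite subr_gt0.
  move=> t t_gt0 t_lt; have := bhat_min (bhat + t *: v); rewrite !slope_objE.
  have sk_le1 : `|- sk| <= 1 by rewrite normrN normr_sg_le1.
  have : slope_pen lam (bhat + t *: v) <= slope_pen lam bhat.
    by apply: slope_pen_shift sk_le1 t_gt0 _ => //; lra.
  lra.
rewrite Dv -normrEsg subr_ge0 => gk_le.
rewrite (le_trans gk_le) // (le_trans (ler_norm _)) // normrM normrN.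
by rewrite ler_piMl ?normr_sg_le1.
Qed.
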